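(* Let $M,n\geq 3$ be integers with $n$ odd, and let $\beta$ be an integer with $0\leq\beta\leq n$ and $\beta\neq 1$. Then $(n-\beta,\beta)\in \mathrm{HWP}(C_M[n];M,Mn)$; that is, $C_M[n]$ can be factorized into $n-\beta$ $C_M$-factors and $\beta$ $C_{Mn}$-factors.
   Context: $C_M[n]$ denotes the lexicographic product of the $M$-cycle with the empty graph on $n$ vertices: vertex set $\mathbb Z_M\times\mathbb Z_n$, with $(i,x)(j,y)$ an edge iff $j-i\equiv\pm1\pmod M$. A $C_k$-factor of a graph $G$ is a spanning subgraph of $G$ all of whose components are cycles of length $k$. For a graph $G$ and integers $M,N\ge3$, $\mathrm{HWP}(G;M,N)$ is the set of pairs $(\alpha,\beta)$ of nonnegative integers such that $G$ admits a set of $\alpha$ $C_M$-factors and $\beta$ $C_N$-factors whose edge sets partition $E(G)$. *)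

From mathcomp Require Import all_boot.
Set Implicit Arguments. Unset Strict Implicit. Unset Printing Implicit Defensive.

Section Graphs.
Variable V : finType.

(* A simple graph on V is given by a symmetric irreflexive relation g.
   Edges are represented as 2-element vertex sets {x, y}. *)
Definition edgeset (g : rel V) : {set {set V}} :=
  [set [set p.1; p.2] | p in [set p : V * V | g p.1 p.2]].

Definition cycle_edges (c : seq V) : {set {set V}} :=
  [set [set x; next c x] | x in c].

Definition is_kcycle (g : rel V) (k : nat) (c : seq V) : bool :=
  [&& size c == k, uniq c & cycle g c].

Definition Ck_factor (g : rel V) (k : nat) (F : {set {set V}}) : Prop :=
  exists cs : seq (seq V),
    all (is_kcycle g k) cs /\
    (forall v : V, count (fun c => v \in c) cs = 1) /\
    F = \bigcup_(c <- cs) cycle_edges c.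

(* (a, b) \in HWP(g; M, N): a C_M-factors and b C_N-factors whose edge sets
   partition E(g). *)
Definition HWP (g : rel V) (M N : nat) (ab : nat * nat) : Prop :=
  exists (FM : 'I_ab.1 -> {set {set V}}) (FN : 'I_ab.2 -> {set {set V}}),
    (forall i, Ck_factor g M (FM i)) /\
    (forall j, Ck_factor g N (FN j)) /\
    (forall e, e \in edgeset g ->
       #|[set i | e \in FM i]| + #|[set j | e \in FN j]| = 1).

End Graphs.

Definition CMn (M n : nat) : rel ('I_M * 'I_n) :=
  fun u v => ((v.1 : nat) == (u.1 + 1) %% M) || ((u.1 : nat) == (v.1 + 1) %% M).
Arguments CMn M n : clear implicits.
Arguments HWP {V} g M N ab.
Arguments Ck_factor {V} g k F.

From mathcomp Require Import all_boot zify.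
Set Implicit Arguments. Unset Strict Implicit. Unset Printing Implicit Defensive.

(* A jump sequence a_k(0), ...,
   a_k(M-1) in Z_n determines the 2-regular spanning subgraph F_k with edges
   (i, w) -- (i+1, w + a_k(i)).  Walking along F_k from (0, x) one returns to column 0
   at (0, x + s_k), where s_k is the sum of the jumps; hence F_k is a C_M-factor when
   s_k = 0 and a Hamilton cycle, i.e. a C_Mn-factor, when s_k is a unit of Z_n.  If
   moreover k |-> a_k(i) is a bijection of Z_n for every column i, the n subgraphs F_k
   partition the edges.
   Take a_k(i) = k, -k alternately in the interior columns, a_k(0) = -2k or -k
   according to the parity of M so that the first M - 1 jumps sum to -k, and
   a_k(M-1) = pi(k) for a permutation pi of Z_n fixing every k >= beta and moving
   every k < beta by +1, -1 or -2: transpositions of consecutive numbers, plus the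
   3-cycle (0 1 2) when beta is odd; this is where beta != 1 is needed.  Then
   s_k = pi(k) - k is 0 for k >= beta and a unit modulo the odd number n for
   k < beta. *)

Section Trajectory.
Variables (V : finType) (g : rel V) (f : nat -> V) (N : nat).
Hypotheses (N_gt0 : 0 < N) (f_period : f N = f 0)
  (f_step : forall j, j < N -> g (f j) (f j.+1))
  (f_inj : forall j j', j < N -> j' < N -> f j = f j' -> j = j').

Let c := map f (iota 0 N).

Lemma traj_uniq : uniq c.
Proof.
rewrite /c map_inj_in_uniq ?iota_uniq // => j j'; rewrite !mem_iota /= !add0n.
exact: f_inj.
Qed.

Let c_cons : c = f 0 :: map f (iota 1 N.-1).
Proof. by rewrite /c; case: N N_gt0. Qed.

Lemma traj_cycle : cycle g c.
Proof.
rewrite c_cons /=.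
have -> : rcons (map f (iota 1 N.-1)) (f 0) = map f (iota 1 N).
  rewrite -f_period -map_rcons; congr map; case: N N_gt0 => // N' _.
  by rewrite -cats1 -(iotaD 1 N' 1) addn1.
apply/(pathP (f 0)) => i; rewrite size_map size_iota => hi.
rewrite -[f 0 :: _]/(map f (0 :: iota 1 N)).
rewrite (nth_map 0) /=; last by rewrite size_iota ltnW.
rewrite (nth_map 0) ?size_iota //.
case: i hi => [|i] hi /=; first by rewrite nth_iota //; apply: f_step.
by rewrite !nth_iota ?add1n; try lia; apply: f_step; lia.
Qed.

Lemma next_traj j : j < N -> next c (f j) = f j.+1.
Proof.
move=> hj; have fj_in : f j \in c by apply: map_f; rewrite mem_iota.
have index_fj : index (f j) c = j.
  have -> : f j = nth (f 0) c j by rewrite /c (nth_map 0) ?size_iota // nth_iota.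
  by rewrite index_uniq ?size_map ?size_iota // traj_uniq.
rewrite next_nth fj_in index_fj c_cons.
case: (ltnP j N.-1) => hj'; first by rewrite (nth_map 0) ?size_iota // nth_iota.
have -> : j = N.-1 by lia.
by rewrite nth_default ?size_map ?size_iota // -f_period; case: N N_gt0.
Qed.

Lemma cycle_edges_traj e :
  e \in cycle_edges c -> exists2 j, j < N & e = [set f j; f j.+1].
Proof.
case/imsetP => x /mapP [j]; rewrite mem_iota add0n => /andP [_ hj] -> ->.
by exists j => //; rewrite next_traj.
Qed.

Lemma traj_edge_in_cycle_edges j : j < N -> [set f j; f j.+1] \in cycle_edges c.
Proof.
by move=> hj; rewrite -next_traj //; apply/imset_f/map_f; rewrite mem_iota.
Qed.

End Trajectory.

Lemma coprime_mulmod_inj n u q q' : coprime u n -> q < n -> q' < n ->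
  q * u = q' * u %[mod n] -> q = q'.
Proof.
move=> cu.
wlog le_qq' : q q' / q <= q'.
  move=> W hq hq' h; case: (leqP q q') => l; first exact: W.
  by symmetry; apply: W => //; apply: ltnW.
move=> hq hq' /eqP; rewrite eq_sym eqn_mod_dvd ?leq_mul2r ?le_qq' ?orbT //.
rewrite -mulnBl Gauss_dvdl; last by rewrite coprime_sym.
case h : (q' - q) => [|d]; first by move=> _; lia.
by move/(dvdn_leq (ltn0Sn d)) => hd; lia.
Qed.

Lemma modn_inj_onto n (h : nat -> nat) : 0 < n ->
  (forall k k', k < n -> k' < n -> h k = h k' %[mod n] -> k = k') ->
  forall y, y < n -> exists2 k, k < n & h k %% n = y.
Proof.
case: n => // n _ h_inj y hy.
pose F : 'I_n.+1 -> 'I_n.+1 := fun k => inord (h k %% n.+1).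
have F_inj : injective F.
  move=> k k' /(congr1 val); rewrite /F /= !inordK ?ltn_mod // => /h_inj e.
  exact/val_inj/e.
case/codomP: (injF_onto F_inj (Ordinal hy)) => k /(congr1 val) /=.
by rewrite inordK ?ltn_mod // => ->; exists k.
Qed.

Lemma mem_bigcup_seq (T : finType) (I : Type) (s : seq I) (F : I -> {set T}) x :
  (x \in \bigcup_(c <- s) F c) = has (fun c => x \in F c) s.
Proof.
elim: s => [|c s IH]; first by rewrite big_nil in_set0.
by rewrite big_cons in_setU IH.
Qed.

Lemma eq_set2_cases (T : finType) (u v a b : T) : u != v ->
  [set u; v] = [set a; b] -> (u = a /\ v = b) \/ (u = b /\ v = a).
Proof.
move=> neq_uv e.
have : v \in [set a; b] by rewrite -e set22.
have : u \in [set a; b] by rewrite -e set21.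
rewrite !inE => /orP [] /eqP eq_u /orP [] /eqP eq_v; try by [left | right].
all: by rewrite eq_u eq_v eqxx in neq_uv.
Qed.

Lemma card_shift_eq m d c (Q : 'I_m -> bool) :
  (forall i : 'I_m, Q i = (d + i == c)) ->
  #|[set i | Q i]| = (d <= c < d + m).
Proof.
move=> hQ; case: (boolP (d <= c < d + m)) => [/andP [dc cdm] | h].
  have hc : c - d < m by lia.
  rewrite (_ : [set i | Q i] = [set Ordinal hc]) ?cards1 //.
  apply/setP => i; rewrite !inE hQ; apply/eqP/eqP => [e|->/=]; last by lia.
  by apply: val_inj => /=; lia.
rewrite (_ : [set i | Q i] = set0) ?cards0 //.
apply/setP => i; rewrite !inE hQ; apply/negbTE/eqP => e; move: h.
by rewrite -e leq_addr /= ltn_add2l ltn_ord.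
Qed.

Lemma coprime_subn1 n : 0 < n -> coprime (n - 1) n.
Proof. by case: n => // n _; rewrite subn1 /= coprimenS. Qed.

Lemma coprime_subn2 n : 2 < n -> odd n -> coprime (n - 2) n.
Proof.
move=> n_gt2 n_odd; rewrite /coprime {2}(_ : n = (n - 2) + 2); last by lia.
rewrite gcdnDl -/(coprime (n - 2) 2) coprimen2; lia.
Qed.

Lemma edgeset_CMn M n e : e \in edgeset (CMn M n) ->
  exists u v : 'I_M * 'I_n, e = [set u; v] /\ (v.1 : nat) = (u.1 + 1) %% M.
Proof.
case/imsetP => p; rewrite inE /CMn => /orP [] /eqP h ->; first by exists p.1, p.2.
by exists p.2, p.1; rewrite setUC.
Qed.

Lemma addn_mod_neq m x d : x < m -> 0 < d < m -> (x + d) %% m != x.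
Proof.
move=> hx /andP [d_gt0 d_lt]; apply/eqP => /eqP.
rewrite -{2}(modn_small hx) -{2}(addn0 x) eqn_modDl mod0n (modn_small d_lt).
by move/eqP=> d0; rewrite d0 in d_gt0.
Qed.

Section JumpFactors.
Variables (m' n' beta : nat).
Local Notation M := m'.+1.
Local Notation n := n'.+1.
Variable jump : nat -> nat -> nat.

(* walk k x j is the vertex reached from (0, x) after j steps in the factor of
   index k.  A factor with k < beta is the single Hamilton walk of n laps from
   (0, 0); any other factor consists of n one-lap walks, one from each (0, x). *)
Definition vtx (i y : nat) : 'I_M * 'I_n := (inord (i %% M), inord (y %% n)).
Definition jump_sum k i := \sum_(0 <= l < i) jump k l.
Definition lap_shift k := jump_sum k M.
Definition walk k x j := vtx j (x + j %/ M * lap_shift k + jump_sum k (j %% M)).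
Definition laps k := if k < beta then n else 1.
Definition walk_starts k := if k < beta then [:: 0] else iota 0 n.
Definition walk_cycle k x := map (walk k x) (iota 0 (M * laps k)).
Definition jump_factor k :=
  \bigcup_(c <- map (walk_cycle k) (walk_starts k)) cycle_edges c.

Hypotheses (M_gt2 : 2 < M) (beta_le_n : beta <= n)
  (jump_inj : forall i k k', i < M -> k < n -> k' < n ->
     jump k i = jump k' i %[mod n] -> k = k')
  (lap_shift0 : forall k, beta <= k -> k < n -> lap_shift k %% n = 0)
  (lap_shift_coprime : forall k, k < beta -> coprime (lap_shift k) n).

Lemma vtx_col i y : ((vtx i y).1 : nat) = i %% M.
Proof. by rewrite /vtx /= inordK // ltn_mod. Qed.

Lemma vtx_row i y : ((vtx i y).2 : nat) = y %% n.
Proof. by rewrite /vtx /= inordK // ltn_mod. Qed.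

Lemma vtx_congr i y i' y' :
  i = i' %[mod M] -> y = y' %[mod n] -> vtx i y = vtx i' y'.
Proof. by rewrite /vtx => -> ->. Qed.

Lemma vtx_inj i y i' y' :
  vtx i y = vtx i' y' -> i = i' %[mod M] /\ y = y' %[mod n].
Proof.
by move=> e; rewrite -(vtx_col i y) -(vtx_col i' y') -(vtx_row i y) -(vtx_row i' y') e.
Qed.

Lemma vtx_modl i y : vtx (i %% M) y = vtx i y.
Proof. by apply: vtx_congr; rewrite ?modn_mod. Qed.

Lemma vtx_val (v : 'I_M * 'I_n) : vtx v.1 v.2 = v.
Proof.
case: v => i y; rewrite /vtx /= !modn_small //.
by congr pair; apply: val_inj; rewrite /= inordK.
Qed.

Lemma CMn_vtxS i y z : CMn M n (vtx i y) (vtx i.+1 z).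
Proof. by rewrite /CMn !vtx_col modnDml addn1 eqxx. Qed.

Lemma jump_sum0 k : jump_sum k 0 = 0.
Proof. by rewrite /jump_sum big_geq. Qed.

Lemma jump_sumS k i : jump_sum k i.+1 = jump_sum k i + jump k i.
Proof. by rewrite /jump_sum big_nat_recr. Qed.

Lemma walkS k x j : walk k x j.+1 =
  vtx (j %% M).+1 (x + j %/ M * lap_shift k + jump_sum k (j %% M) + jump k (j %% M)).
Proof.
rewrite /walk; have j_eq := divn_eq j M; have j_mod_lt : j %% M < M by rewrite ltn_mod.
case: (ltnP (j %% M).+1 M) => hr.
  have -> : j.+1 = j %/ M * M + (j %% M).+1 by rewrite {1}j_eq addnS.
  rewrite divnMDl // (divn_small hr) addn0 modnMDl (modn_small hr) jump_sumS addnA.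
  by apply: vtx_congr; rewrite ?modnMDl.
have end_lap : (j %% M).+1 = M by apply/eqP; rewrite eqn_leq hr andbT.
have -> : j.+1 = (j %/ M).+1 * M by rewrite {1}j_eq -addnS end_lap mulSn addnC.
rewrite mulnK // modnMl jump_sum0 addn0 end_lap.
apply: vtx_congr; first by rewrite modnMl modnn.
by rewrite -addnA -jump_sumS end_lap -/(lap_shift k) mulSn [lap_shift k + _]addnC addnA.
Qed.

Lemma CMn_walk k x j : CMn M n (walk k x j) (walk k x j.+1).
Proof. by rewrite walkS {1}/walk -vtx_modl; apply: CMn_vtxS. Qed.

Lemma laps_gt0 k : 0 < M * laps k.
Proof. by rewrite muln_gt0 /laps; case: ifP. Qed.

Lemma walk_period k x : k < n -> walk k x (M * laps k) = walk k x 0.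
Proof.
move=> hk; rewrite /walk modnMr mulKn // jump_sum0 div0n mul0n !addn0.
apply: vtx_congr; first by rewrite modnMr mod0n.
rewrite -modnDmr /laps; case: ifP => [_|k_ge]; first by rewrite modnMr addn0.
by rewrite mul1n lap_shift0 ?addn0 // leqNgt k_ge.
Qed.

Lemma walk_inj k x : k < n -> forall j j', j < M * laps k -> j' < M * laps k ->
  walk k x j = walk k x j' -> j = j'.
Proof.
move=> hk j j' hj hj' /vtx_inj [eq_col]; rewrite -eq_col => /eqP.
rewrite eqn_modDr eqn_modDl => /eqP eq_row.
suff eq_lap : j %/ M = j' %/ M by rewrite (divn_eq j M) (divn_eq j' M) eq_lap eq_col.
have : j %/ M < laps k by rewrite ltn_divLR // mulnC.
have : j' %/ M < laps k by rewrite ltn_divLR // mulnC.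
rewrite /laps; case: ifP => [k_lt hq' hq | _]; last by rewrite !ltnS !leqn0 => /eqP -> /eqP ->.
exact: coprime_mulmod_inj (lap_shift_coprime k_lt) hq hq' eq_row.
Qed.

Lemma walk0_onto k (v : 'I_M * 'I_n) : k < beta -> exists2 j, j < M * n & walk k 0 j = v.
Proof.
case: v => i y k_lt /=.
have [q q_lt row_q] : exists2 q, q < n & (q * lap_shift k + jump_sum k i) %% n = y.
  apply: modn_inj_onto => // q q' hq hq' /eqP; rewrite eqn_modDr => /eqP.
  exact: coprime_mulmod_inj (lap_shift_coprime k_lt) hq hq'.
exists (q * M + i).
  have : q * M + i < q.+1 * M by rewrite mulSn addnC ltn_add2r.
  by move/leq_trans; apply; rewrite mulnC leq_mul2l q_lt orbT.
rewrite -(vtx_val (i, y)) /walk divnMDl // divn_small // addn0 modnMDl modn_small //.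
by apply: vtx_congr; rewrite ?modnMDl //= add0n row_q modn_small.
Qed.

Lemma walk_onto k (v : 'I_M * 'I_n) : exists2 x, x < n & walk k x v.1 = v.
Proof.
case: v => i y /=; set p := jump_sum k i.
exists ((y + (n - p %% n)) %% n); first by rewrite ltn_mod.
rewrite -(vtx_val (i, y)) /walk (divn_small (ltn_ord i)) mul0n addn0 (modn_small (ltn_ord i)).
apply: vtx_congr => //=; rewrite modnDml -/p -modnDmr -addnA subnK ?modnDr //.
by rewrite ltnW // ltn_mod.
Qed.

Lemma walk_start_inj k x x' j j' : x < n -> x' < n -> j < M -> j' < M ->
  walk k x j = walk k x' j' -> x = x'.
Proof.
move=> hx hx' hj hj' /vtx_inj [].
rewrite (modn_small hj) (modn_small hj') => <-; rewrite divn_small // !mul0n !addn0 => /eqP.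
by rewrite eqn_modDr !modn_small // => /eqP.
Qed.

Lemma walk_cycles_cover k v : exists2 x, x \in walk_starts k &
  exists2 j, j < M * laps k & walk k x j = v.
Proof.
rewrite /walk_starts /laps; case: ifP => k_lt.
  by exists 0; rewrite ?inE //; apply: walk0_onto.
have [x hx walk_x] := walk_onto k v.
by exists x; rewrite ?mem_iota //; exists v.1; rewrite ?muln1.
Qed.

Lemma count_walk_cycles k v : k < n ->
  count (fun c => v \in c) (map (walk_cycle k) (walk_starts k)) = 1.
Proof.
move=> hk; rewrite /walk_starts; case: ifP => k_lt.
  have [j hj <-] := walk0_onto v k_lt.
  by rewrite /= addn0 map_f // mem_iota /laps k_lt.
have [x hx walk_x] := walk_onto k v.
rewrite /walk_cycle /laps k_lt count_map (@eq_in_count _ _ (pred1 x)).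
  by rewrite count_uniq_mem ?iota_uniq // mem_iota add0n hx.
move=> x'; rewrite mem_iota add0n muln1 => hx'; apply/mapP/eqP => [[j]|->].
  rewrite mem_iota add0n => hj walk_x'.
  by apply: (@walk_start_inj k _ _ _ _ hx' hx hj (ltn_ord v.1)); rewrite walk_x -walk_x'.
by exists (v.1 : nat); rewrite ?walk_x // mem_iota add0n ltn_ord.
Qed.

Lemma jump_factor_Ck_factor k : k < n -> Ck_factor (CMn M n) (M * laps k) (jump_factor k).
Proof.
move=> hk; exists (map (walk_cycle k) (walk_starts k)); split; last split => //.
  apply/allP => c /mapP [x _ ->].
  rewrite /is_kcycle /walk_cycle size_map size_iota eqxx /=.
  rewrite (traj_uniq (@walk_inj k x hk)).
  by rewrite (traj_cycle (laps_gt0 k) (walk_period x hk)) // => j _; apply: CMn_walk.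
by move=> v; apply: count_walk_cycles.
Qed.

Lemma jump_factor_edge k e : k < n -> e \in jump_factor k ->
  exists i w, i < M /\ e = [set vtx i w; vtx i.+1 (w + jump k i)].
Proof.
move=> hk; rewrite /jump_factor mem_bigcup_seq => /hasP [c /mapP [x _ ->]].
case/(cycle_edges_traj (laps_gt0 k) (walk_period x hk) (@walk_inj k x hk)) => j _ ->.
exists (j %% M), (x + j %/ M * lap_shift k + jump_sum k (j %% M)).
by rewrite ltn_mod walkS {1}/walk vtx_modl.
Qed.

Lemma jump_edge_in_factor k i w : k < n -> i < M ->
  [set vtx i w; vtx i.+1 (w + jump k i)] \in jump_factor k.
Proof.
move=> hk hi; have [x hx [j hj walk_j]] := walk_cycles_cover k (vtx i w).
rewrite /jump_factor mem_bigcup_seq; apply/hasP; exists (walk_cycle k x); first exact: map_f.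
have := traj_edge_in_cycle_edges (laps_gt0 k) (walk_period x hk) (@walk_inj k x hk) hj.
have [eq_col eq_row] := vtx_inj walk_j.
rewrite (modn_small hi) in eq_col; rewrite walk_j walkS eq_col in eq_row *.
suff -> : vtx i.+1 (x + j %/ M * lap_shift k + jump_sum k i + jump k i) =
  vtx i.+1 (w + jump k i) by [].
by apply: vtx_congr => //; rewrite -modnDml eq_row modnDml.
Qed.

Lemma mem_jump_factor k (u v : 'I_M * 'I_n) : k < n -> (v.1 : nat) = (u.1 + 1) %% M ->
  ([set u; v] \in jump_factor k) = ((u.2 + jump k u.1) %% n == v.2).
Proof.
move=> hk v1E; apply/idP/eqP => [|row_v].
  case/(jump_factor_edge hk) => i [w [hi uvE]].
  (* M > 2: the edge (i, w) -- (i+1, w') cannot also run from column i+1 to i. *)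
  have neq_uv : u != v.
    apply/eqP => uv; move: v1E; rewrite uv => /eqP.
    by rewrite eq_sym (negbTE (addn_mod_neq (ltn_ord _) _)) //= ltnS ltnW.
  case: (eq_set2_cases neq_uv uvE) => [[-> ->] | [uE vE]].
    by rewrite vtx_col !vtx_row (modn_small hi) modnDml.
  move: v1E; rewrite uE vE !vtx_col (modn_small hi) modnDml addn1 -addn2 => /eqP.
  by rewrite eq_sym (negbTE (addn_mod_neq hi _)).
have := @jump_edge_in_factor k u.1 u.2 hk (ltn_ord _).
rewrite vtx_val; suff -> : vtx (u.1).+1 (u.2 + jump k u.1) = v by [].
rewrite -(vtx_val v); apply: vtx_congr.
  by rewrite (modn_small (ltn_ord v.1)) v1E addn1.
by rewrite row_v (modn_small (ltn_ord v.2)).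
Qed.

Theorem jump_factors_HWP : HWP (CMn M n) M (M * n) (n - beta, beta).
Proof.
exists (fun i : 'I_(n - beta) => jump_factor (beta + i)), (fun j : 'I_beta => jump_factor j).
split; [|split].
- move=> i; have hk : beta + i < n by move: (ltn_ord i) => /=; lia.
  by have := jump_factor_Ck_factor hk; rewrite /laps ltnNge leq_addr /= muln1.
- move=> j; have hk : j < n := leq_trans (ltn_ord j) beta_le_n.
  by have := jump_factor_Ck_factor hk; rewrite /laps ltn_ord.
move=> e /edgeset_CMn [u [v [-> v1E]]].
have [k0 hk0 row_v] : exists2 k0, k0 < n & (u.2 + jump k0 u.1) %% n = v.2.
  apply: modn_inj_onto => // k k' hk hk' /eqP; rewrite eqn_modDl => /eqP.
  exact: jump_inj.
have in_factor k : k < n -> ([set u; v] \in jump_factor k) = (k == k0).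
  move=> hk; rewrite mem_jump_factor //; apply/eqP/eqP => [h|->//].
  apply: (@jump_inj u.1) => //; apply/eqP; rewrite -(eqn_modDl u.2).
  by rewrite h row_v.
rewrite (@card_shift_eq _ beta k0) => [|i]; last first.
  by rewrite in_factor //; move: (ltn_ord i) => /=; lia.
rewrite (@card_shift_eq _ 0 k0) => [|i]; last first.
  by rewrite add0n in_factor // (leq_trans (ltn_ord i) beta_le_n).
by rewrite /=; case: (ltnP k0 beta) => //= k0_ge; rewrite subnKC // hk0.
Qed.

End JumpFactors.

Section ConcreteJumps.
Variables (m' n' beta : nat).
Local Notation M := m'.+1.
Local Notation n := n'.+1.

Definition last_jump k :=
  if beta <= k then k
  else if odd beta && (k < 3) then (if k == 2 then 0 else k.+1)
  else if odd k == odd beta then k.+1 else k.-1.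

(* n - 1 and n - 2 stand for -1 and -2 in Z_n. *)
Definition first_jump_coef := if odd M then n - 2 else n - 1.

Definition jump k i :=
  if i == M.-1 then last_jump k
  else if i == 0 then first_jump_coef * k
  else if odd i then k else (n - 1) * k.

Lemma last_jump_lt k : beta <= n -> beta != 1 -> k < n -> last_jump k < n.
Proof. by rewrite /last_jump; repeat case: ifP; lia. Qed.

Lemma last_jump_inj k k' : beta != 1 -> last_jump k = last_jump k' -> k = k'.
Proof. by rewrite /last_jump; repeat case: ifP; lia. Qed.

Lemma last_jump_id k : beta <= k -> last_jump k = k.
Proof. by rewrite /last_jump => ->. Qed.

Lemma last_jump_cases k : k < beta ->
  [\/ last_jump k = k.+1, last_jump k = k.-1 /\ 0 < k | last_jump k = 0 /\ k = 2].
Proof.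
move=> k_lt; rewrite /last_jump (leqNgt beta k) k_lt /=; repeat case: ifP => ?.
all: try by constructor 1; lia.
all: try by constructor 3; lia.
all: by constructor 2; lia.
Qed.

Lemma first_jump_coef_coprime : 2 < n -> odd n -> coprime first_jump_coef n.
Proof.
move=> n_gt2 n_odd; rewrite /first_jump_coef.
by case: ifP => _; [apply: coprime_subn2 | apply: coprime_subn1].
Qed.

Lemma jump_sum_mod k i : 0 < i < M ->
  jump_sum jump k i = first_jump_coef * k + (if odd i then 0 else k) %[mod n].
Proof.
elim: i => [//|[|i] IH] /andP [_ hi].
  by rewrite jump_sumS jump_sum0 add0n /jump /= (_ : (0 == m') = false) ?addn0 //; lia.
rewrite jump_sumS -modnDml IH ?(ltnW hi) // modnDml /jump.
rewrite (_ : (i.+1 == M.-1) = false) /=; last by apply/eqP; lia.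
case: (boolP (odd i)) => /= _; last by rewrite addn0.
have -> : first_jump_coef * k + k + (n - 1) * k = k * n + (first_jump_coef * k + 0) by nia.
by rewrite modnMDl.
Qed.

Lemma lap_shift_mod k : 1 < M -> 1 < n ->
  lap_shift m' jump k = (n - 1) * k + last_jump k %[mod n].
Proof.
move=> M_gt1 n_gt1; rewrite /lap_shift jump_sumS -modnDml jump_sum_mod; last by lia.
rewrite modnDml /jump eqxx.
by rewrite /first_jump_coef /=; case: (odd m') => /=; congr (_ %% n); nia.
Qed.

Lemma jump_inj i k k' : 2 < n -> odd n -> beta <= n -> beta != 1 -> k < n -> k' < n ->
  jump k i = jump k' i %[mod n] -> k = k'.
Proof.
move=> n_gt2 n_odd beta_le_n beta_neq1 hk hk'; rewrite /jump; case: ifP => _.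
  by rewrite !modn_small ?last_jump_lt //; apply: last_jump_inj.
case: ifP => _.
  rewrite ![first_jump_coef * _]mulnC.
  exact: coprime_mulmod_inj (first_jump_coef_coprime n_gt2 n_odd) hk hk'.
case: ifP => _; first by rewrite !modn_small.
by rewrite ![(n - 1) * _]mulnC; exact: coprime_mulmod_inj (coprime_subn1 _) hk hk'.
Qed.

Lemma lap_shift_jump0 k : 1 < M -> 1 < n -> beta <= k -> lap_shift m' jump k %% n = 0.
Proof.
move=> M_gt1 n_gt1 k_ge; rewrite lap_shift_mod // last_jump_id //.
have -> : (n - 1) * k + k = k * n by nia.
by rewrite modnMl.
Qed.

Lemma lap_shift_jump_coprime k : 1 < M -> 2 < n -> odd n -> k < beta ->
  coprime (lap_shift m' jump k) n.
Proof.
move=> M_gt1 n_gt2 n_odd k_lt; rewrite -coprime_modl lap_shift_mod ?(ltnW n_gt2) //.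
case: (last_jump_cases k_lt) => [-> | [-> k_gt0] | [-> ->]].
- have -> : (n - 1) * k + k.+1 = k * n + 1 by nia.
  by rewrite modnMDl modn_small ?coprime1n //; lia.
- have -> : (n - 1) * k + k.-1 = k.-1 * n + (n - 1) by nia.
  by rewrite modnMDl modn_small ?coprime_subn1 //; lia.
- have -> : (n - 1) * 2 + 0 = 1 * n + (n - 2) by nia.
  by rewrite modnMDl modn_small ?coprime_subn2 //; lia.
Qed.

End ConcreteJumps.

Theorem mainTheorem3 (M n beta : nat) :
  3 <= M -> 3 <= n -> odd n -> beta <= n -> beta != 1 ->
  HWP (CMn M n) M (M * n) (n - beta, beta).
Proof.
case: M => [|m'] //; case: n => [|n'] // M_gt2 n_gt2 n_odd beta_le_n beta_neq1.
have M_gt1 := ltnW M_gt2; have n_gt1 := ltnW n_gt2.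
apply: (@jump_factors_HWP m' n' beta (jump m' n' beta)) => // [i k k' _ | k k_ge _ | k k_lt].
- exact: jump_inj.
- exact: lap_shift_jump0.
- exact: lap_shift_jump_coprime.
Qed.
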